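(* Let $n\ge 3$ and let $\gamma,\delta\in\mathbb{R}$ be arbitrary. Define $P(\rho) = -\frac{2n+\delta}{n(n-1)} + \frac{(\delta-\gamma)\rho}{n(n+1)} + \frac{\gamma\rho^2}{(n+1)(n+2)}$, $\alpha = -1 - \frac{\delta}{n(n+1)} - \frac{\gamma}{(n+1)(n+2)}$, $\beta = \frac{n+1}{n-1} + \frac{\delta}{n(n-1)} + \frac{\gamma}{n(n+1)}$, and $Q(\rho) = \rho^{n-1} - \rho^n - \rho^nP(\rho) - \alpha - \beta\rho$. Then: (1) the polynomial $\rho^{n+1} - \rho^n + \rho^nP(\rho) + \alpha + \beta\rho$ has a zero of order at least $3$ at $\rho=1$; (2) $Q(1) = Q'(1) = 0$ and $Q''(1) = 2$; in particular $Q$ has a zero of order exactly $2$ at $\rho=1$. In particular, $\rho=1$ is a removable singularity of the rational function $h''(\rho) = \frac{\rho^{n+1} - \rho^n + \rho^nP(\rho) + \alpha + \beta\rho}{(1-\rho)\rho\,Q(\rho)}$. *)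

From mathcomp Require Import all_boot all_order all_algebra.
Set Implicit Arguments. Unset Strict Implicit. Unset Printing Implicit Defensive.
Import Order.TTheory GRing.Theory Num.Theory.
Local Open Scope ring_scope.

Section Defs.
Variables (R : realFieldType) (n : nat) (gamma delta : R).

Definition nR : R := n%:R.

Definition Ppoly : {poly R} :=
  (- ((2 * nR + delta) / (nR * (nR - 1))))%:P
  + ((delta - gamma) / (nR * (nR + 1)))%:P * 'X
  + (gamma / ((nR + 1) * (nR + 2)))%:P * 'X ^+ 2.

Definition alpha : R :=
  - 1 - delta / (nR * (nR + 1)) - gamma / ((nR + 1) * (nR + 2)).

Definition beta : R :=
  (nR + 1) / (nR - 1) + delta / (nR * (nR - 1)) + gamma / (nR * (nR + 1)).

Definition Qpoly : {poly R} :=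
  'X ^+ n.-1 - 'X ^+ n - 'X ^+ n * Ppoly - alpha%:P - beta *: 'X.

Definition Npoly : {poly R} :=
  'X ^+ n.+1 - 'X ^+ n + 'X ^+ n * Ppoly + alpha%:P + beta *: 'X.

Definition Dpoly : {poly R} := (1 - 'X) * 'X * Qpoly.

End Defs.

(* Since N + Q = rho^(n-1) (rho - 1)^2, everything follows from N having a
   triple root at 1: writing N = (rho - 1)^3 r, we get
   Q = (rho - 1)^2 (rho^(n-1) - (rho - 1) r), whose cofactor is 1 at rho = 1,
   and N / D reduces to -r / (rho (rho^(n-1) - (rho - 1) r)).  Writing
   N = rho^n (rho - 1 + P) + alpha + beta rho, the values N(1) and N'(1) are
   linear in alpha and beta, which are precisely chosen to make them vanish;
   N''(1) does not involve alpha and beta and vanishes identically in n,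
   gamma and delta. *)

From mathcomp Require Import all_boot all_order all_algebra.
From mathcomp Require Import ring lra.
Import Order.TTheory GRing.Theory Num.Theory.
Local Open Scope ring_scope.

Section PolyDerivatives.
Variable R : comNzRingType.
Implicit Types (p q : {poly R}) (a : R).

Lemma derivn2M p q :
  (p * q)^`(2) = p^`(2) * q + (p^`() * q^`()) *+ 2 + p * q^`(2).
Proof. by rewrite !derivnS derivn0 !derivM derivD !derivM; ring. Qed.

Lemma deriv_mulXsubC p a : ((p * ('X - a%:P))^`()).[a] = p.[a].
Proof. by rewrite derivM derivXsubC !hornerE subrr mulr0 add0r. Qed.

Lemma derivn2_mulXsubC_sqr p a : ((p * ('X - a%:P) ^+ 2)^`(2)).[a] = p.[a] *+ 2.
Proof.
rewrite derivn2M !derivnS derivn0 expr2 derivM derivXsubC mul1r mulr1 -mulr2n.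
rewrite derivMn derivXsubC !(hornerXsubC, hornerD, hornerMn, hornerM) subrr.
by rewrite -polyC1 hornerC; ring.
Qed.

Lemma derivn2_mulXsubC_cube p a : ((p * ('X - a%:P) ^+ 3)^`(2)).[a] = 0.
Proof.
rewrite exprSr mulrA mulrAC derivn2_mulXsubC_sqr.
by rewrite hornerM hornerXsubC subrr mulr0 mul0rn.
Qed.

Lemma deriv_XnM_at1 n p : (('X ^+ n * p)^`()).[1] = n%:R * p.[1] + p^`().[1].
Proof. by rewrite derivM derivXn hornerD !hornerM hornerMn !hornerXn !expr1n; ring. Qed.

Lemma derivn2_XnM_at1 n p :
  (('X ^+ n * p)^`(2)).[1] = (n * n.-1)%:R * p.[1] + (2 * n)%:R * p^`().[1] + p^`(2).[1].
Proof.
rewrite derivn2M !derivnS derivn0 derivXn derivMn derivXn.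
by rewrite !(hornerD, hornerM, hornerMn, hornerXn) !expr1n !mulrnA; ring.
Qed.

End PolyDerivatives.

Lemma dvdp_exp3_XsubC (R : numDomainType) (p : {poly R}) (a : R) :
  p.[a] = 0 -> (p^`()).[a] = 0 -> (p^`(2)).[a] = 0 -> ('X - a%:P) ^+ 3 %| p.
Proof.
move=> /rootP/factor_theorem[q ->].
rewrite deriv_mulXsubC => /rootP/factor_theorem[r ->].
rewrite -mulrA -expr2 derivn2_mulXsubC_sqr => /eqP.
rewrite mulrn_eq0 /= => /eqP/rootP/factor_theorem[s ->].
by rewrite -mulrA -exprS dvdp_mull.
Qed.

Section NumeratorAndQ.
Variables (R : realFieldType) (n : nat) (gamma delta : R).

Local Notation nR := (nR R n).
Local Notation P := (Ppoly n gamma delta).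
Local Notation N := (Npoly n gamma delta).
Local Notation Q := (Qpoly n gamma delta).

Lemma horner_Ppoly1 :
  P.[1] = - ((2 * nR + delta) / (nR * (nR - 1)))
          + (delta - gamma) / (nR * (nR + 1)) + gamma / ((nR + 1) * (nR + 2)).
Proof. by rewrite /Ppoly !(hornerD, hornerM, hornerC, hornerX, hornerXn) ?expr1n; ring. Qed.

Lemma deriv_Ppoly1 :
  (P^`()).[1] = (delta - gamma) / (nR * (nR + 1)) + gamma / ((nR + 1) * (nR + 2)) *+ 2.
Proof.
rewrite /Ppoly !(derivD, derivN, derivM, derivC, derivX, derivXn) /=.
by rewrite !(hornerD, hornerN, hornerM, hornerMn, hornerC, hornerX, horner0); ring.
Qed.

Lemma derivn2_Ppoly1 : (P^`(2)).[1] = gamma / ((nR + 1) * (nR + 2)) *+ 2.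
Proof.
rewrite /Ppoly !derivnS derivn0 !(derivD, derivN, derivM, derivC, derivX, derivXn, derivMn) /=.
by rewrite !(hornerD, hornerN, hornerM, hornerMn, hornerC, hornerX, horner0); ring.
Qed.

Lemma Npoly_XnM :
  N = 'X ^+ n * ('X - 1 + P) + (alpha n gamma delta)%:P + beta n gamma delta *: 'X.
Proof. by rewrite /Npoly exprS; ring. Qed.

Lemma Qpoly_Npoly (n_gt0 : (0 < n)%N) : Q = 'X ^+ n.-1 * ('X - 1) ^+ 2 - N.
Proof. by rewrite /Npoly /Qpoly; case: n n_gt0 => // m _; rewrite !exprS; ring. Qed.

Lemma horner_Npoly1 : N.[1] = P.[1] + alpha n gamma delta + beta n gamma delta.
Proof.
rewrite Npoly_XnM -polyC1; move: (Ppoly n gamma delta) => p.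
by rewrite !(hornerD, hornerN, hornerM, hornerZ, hornerC, hornerX, hornerXn) expr1n; ring.
Qed.

Lemma deriv_Npoly1 :
  (N^`()).[1] = nR * P.[1] + 1 + (P^`()).[1] + beta n gamma delta.
Proof.
rewrite Npoly_XnM; move: (Ppoly n gamma delta) => p.
rewrite !derivD !hornerD deriv_XnM_at1 derivC derivZ derivX -polyC1.
rewrite !(derivD, derivN, derivC, derivX).
by rewrite !(hornerD, hornerN, hornerZ, hornerC, hornerX, horner0); ring.
Qed.

Lemma derivn2_Npoly1 :
  (N^`(2)).[1] = (n * n.-1)%:R * P.[1] + (2 * n)%:R * (1 + (P^`()).[1]) + (P^`(2)).[1].
Proof.
rewrite Npoly_XnM; move: (Ppoly n gamma delta) => p.
rewrite !derivnD !hornerD derivn2_XnM_at1 -polyC1 !derivnS !derivn0.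
rewrite !(derivD, derivN, derivC, derivZ, derivX, deriv0, scaler0).
by rewrite !(hornerD, hornerN, hornerZ, hornerC, hornerX, horner0); ring.
Qed.

Lemma Npoly_root3 (n_ge3 : (3 <= n)%N) : ('X - 1) ^+ 3 %| N.
Proof.
have n_gt2 : 2 < n%:R :> R by rewrite ltr_nat.
have predn_nR : (n.-1)%:R = nR - 1 by rewrite -subn1 natrB // (leq_trans _ n_ge3).
rewrite -polyC1; apply: dvdp_exp3_XsubC.
- rewrite horner_Npoly1 horner_Ppoly1 /alpha /beta.
  by field; rewrite !lt0r_neq0 //; lra.
- rewrite deriv_Npoly1 horner_Ppoly1 deriv_Ppoly1 /beta.
  by field; rewrite !lt0r_neq0 //; lra.
rewrite derivn2_Npoly1 horner_Ppoly1 deriv_Ppoly1 derivn2_Ppoly1 !natrM predn_nR.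
by field; rewrite !lt0r_neq0 //; lra.
Qed.
End NumeratorAndQ.


Theorem lemma4p5 (R : realFieldType) (n : nat) (gamma delta : R) :
  (3 <= n)%N ->
  (* (1) the numerator has a zero of order at least 3 at 1 *)
  (('X - 1) ^+ 3 %| Npoly n gamma delta)
  (* (2) Q(1) = Q'(1) = 0, Q''(1) = 2, and Q has a zero of order exactly 2 at 1 *)
  /\ (Qpoly n gamma delta).[1] = 0
  /\ ((Qpoly n gamma delta)^`()).[1] = 0
  /\ ((Qpoly n gamma delta)^`(2)).[1] = 2
  /\ (('X - 1) ^+ 2 %| Qpoly n gamma delta)
  /\ ~~ (('X - 1) ^+ 3 %| Qpoly n gamma delta)
  (* removable singularity: N/D = A/B with B(1) <> 0 *)
  /\ (exists A B : {poly R},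
        B.[1] != 0 /\ Npoly n gamma delta * B = Dpoly n gamma delta * A).
Proof.
move=> n_ge3; have n_gt0 : (0 < n)%N by apply: leq_trans n_ge3.
have N_root3 : ('X - 1) ^+ 3 %| Npoly n gamma delta by exact: Npoly_root3.
have /dvdpP[r N_eq] := N_root3.
set q := 'X ^+ n.-1 - r * ('X - 1).
have Q_eq : Qpoly n gamma delta = q * ('X - 1) ^+ 2.
  by rewrite Qpoly_Npoly // N_eq /q; ring.
have q1 : q.[1] = 1.
  rewrite /q -polyC1 hornerD hornerN hornerM hornerXsubC subrr.
  by rewrite mulr0 subr0 hornerXn expr1n.
have Q2 : ((Qpoly n gamma delta)^`(2)).[1] = 2.
  by rewrite Q_eq -polyC1 derivn2_mulXsubC_sqr q1.
split; first exact: N_root3.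
split; first by rewrite Q_eq -polyC1 hornerM horner_exp hornerXsubC subrr expr0n mulr0.
split; first by rewrite Q_eq expr2 mulrA -polyC1 deriv_mulXsubC hornerM hornerXsubC subrr mulr0.
split; first exact: Q2.
split; first by rewrite Q_eq dvdp_mull.
split.
  apply/negP => /dvdpP[s Q_eq3]; move: Q2.
  by rewrite Q_eq3 -polyC1 derivn2_mulXsubC_cube => /eqP; rewrite eq_sym pnatr_eq0.
exists (- r), ('X * q); split; first by rewrite hornerM hornerX q1 mul1r oner_neq0.
by rewrite /Dpoly N_eq Q_eq; ring.
Qed.
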